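(* Let $N=\{1,\dots,n\}$ be a set of $n\ge 1$ agents and $M$ a set of $m$ indivisible goods. Write $m = kn + r$ with $k=\lfloor m/n\rfloor$ and $0\le r<n$. Suppose every agent $i$ has an additive leveled valuation $V_i:2^M\to\mathbb{R}_{\ge 0}$. Fix an arbitrary picking order $\sigma=(\sigma_1,\dots,\sigma_n)$ of the agents and run the following sequential procedure: for $t=1,\dots,n-r$, agent $\sigma_t$ receives a bundle of exactly $k$ still-unallocated goods that maximizes $V_{\sigma_t}$ among all such bundles; then for $t=n-r+1,\dots,n$, agent $\sigma_t$ receives a bundle of exactly $k+1$ still-unallocated goods that maximizes $V_{\sigma_t}$ among all such bundles (ties broken arbitrarily). Then the resulting allocation $B=(B_1,\dots,B_n)$ satisfies $V_i(B_i)\ge \frac{k}{k+1}\,\mu_i$ for every agent $i\in N$, i.e., it is $\frac{\lfloor m/n\rfloor}{\lfloor m/n\rfloor+1}$-MMS. In particular, a $\frac{\lfloor m/n\rfloor}{\lfloor m/n\rfloor+1}$-MMS allocation always exists under additive leveled valuations.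
   Context: A valuation $V:2^M\to\mathbb{R}_{\ge 0}$ is additive if $V(S)=\sum_{g\in S}V(\{g\})$ for all $S\subseteq M$. It is leveled if for any bundles $S,T\subseteq M$ with $|S|>|T|$ we have $V(S)>V(T)$. It is additive leveled if it is both. An allocation is a partition $B=(B_1,\dots,B_n)$ of $M$ into $n$ pairwise disjoint bundles (possibly empty) with $\bigcup_i B_i=M$, where $B_i$ is given to agent $i$; $\Pi_n(M)$ denotes the set of all such partitions. The maximin share of agent $i$ is $\mu_i=\max_{B'\in\Pi_n(M)}\min_{j\in N}V_i(B'_j)$. For $\alpha\in[0,1]$, an allocation $B$ is $\alpha$-MMS if $V_i(B_i)\ge \alpha\,\mu_i$ for all $i\in N$. *)

From HB Require Import structures.
From mathcomp Require Import all_boot all_order all_algebra.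
From mathcomp Require Import perm.
Set Implicit Arguments. Unset Strict Implicit. Unset Printing Implicit Defensive.
Import Order.TTheory GRing.Theory Num.Theory.
Local Open Scope ring_scope.

Section Defs.
Variable R : realFieldType.
Variable M : finType.
Variable n : nat.

Definition seqmax (s : seq R) : R := \big[Num.max/head 0 s]_(x <- s) x.
Definition seqmin (s : seq R) : R := \big[Num.min/head 0 s]_(x <- s) x.

Definition additive_leveled (V : {set M} -> R) : Prop :=
  [/\ forall S, 0 <= V S,
      forall S, V S = \sum_(g in S) V [set g]
    & forall S T : {set M}, (#|T| < #|S|)%N -> V T < V S].

Definition is_allocation (B : {ffun 'I_n -> {set M}}) : bool :=
  [forall i, forall j, (i != j) ==> [disjoint B i & B j]]
  && (\bigcup_(i : 'I_n) B i == [set: M]).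

Definition mms (V : 'I_n -> {set M} -> R) (i : 'I_n) : R :=
  seqmax [seq seqmin [seq V i (B j) | j <- enum 'I_n]
         | B : {ffun 'I_n -> {set M}} <- enum [pred B : {ffun 'I_n -> {set M}} | is_allocation B]].

Definition alpha_MMS (V : 'I_n -> {set M} -> R) (alpha : R)
  (B : {ffun 'I_n -> {set M}}) : Prop :=
  forall i, alpha * mms V i <= V i (B i).

Definition allocated_before (sigma : {perm 'I_n}) (B : {ffun 'I_n -> {set M}})
  (t : 'I_n) : {set M} :=
  \bigcup_(t' : 'I_n | (t' < t)%N) B (sigma t').

Definition pick_size (t : 'I_n) : nat :=
  let k := (#|M| %/ n)%N in let r := (#|M| %% n)%N in
  if (t < n - r)%N then k else k.+1.

(* B is a possible outcome of the sequential procedure with order sigma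
   (ties broken arbitrarily) *)
Definition picking_run (V : 'I_n -> {set M} -> R) (sigma : {perm 'I_n})
  (B : {ffun 'I_n -> {set M}}) : Prop :=
  forall t : 'I_n,
    let j := sigma t in
    let Rem := ~: allocated_before sigma B t in
    [/\ B j \subset Rem,
        #|B j| = pick_size t
      & forall S : {set M}, S \subset Rem -> #|S| = pick_size t ->
          V j S <= V j (B j)].

End Defs.

From HB Require Import structures.
From mathcomp Require Import all_boot all_order all_algebra.
From mathcomp Require Import perm.
From mathcomp Require Import zify lra.
Import Order.TTheory GRing.Theory Num.Theory.
Local Open Scope ring_scope.
Set Implicit Arguments. Unset Strict Implicit. Unset Printing Implicit Defensive.

(* Let m = k n + r and let agent i pick the bundle S at step t.  If |S| = k + 1,
   every allocation has a bundle of at most k goods, worth less than S because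
   the valuation is leveled, so mu_i < V_i(S).  If |S| = k, let h be the least
   valuable good of S, so that k V_i(h) <= V_i(S); it suffices to show
   mu_i <= V_i(S) + V_i(h).  When r = 0, pigeonhole gives a bundle P of every
   allocation with |P \ {h}| < k, hence V_i(P) < V_i(S) + V_i(h).  When r > 0,
   more than k goods remain at step t, so some remaining good g was not picked;
   optimality of S gives V_i(g) <= V_i(h), and a bundle P with |P| <= k
   satisfies V_i(P) < V_i(S u {g}) <= V_i(S) + V_i(h). *)

Lemma leq_sum_subpred (I : finType) (P Q : pred I) (F : I -> nat) :
  (forall i, P i -> Q i) -> (\sum_(i | P i) F i <= \sum_(i | Q i) F i)%N.
Proof.
move=> PQ; rewrite [leqRHS](bigID P) (eq_bigl P) ?leq_addr // => i.
exact/andb_idl/PQ.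
Qed.

Lemma exists_lt_of_sum_lt (I : finType) (f : I -> nat) k :
  (\sum_i f i < #|I| * k)%N -> exists i, (f i < k)%N.
Proof.
move=> sum_lt; have [i lt_fi | ge_f] := pickP [pred i | f i < k]%N; first by exists i.
suff : (#|I| * k <= \sum_i f i)%N by rewrite leqNgt sum_lt.
by rewrite -sum_nat_const; apply: leq_sum => i _; rewrite leqNgt (negbT (ge_f i)).
Qed.

Section Cardinality.
Variable T : finType.

Lemma card_bigcup_le (I : finType) (P : pred I) (F : I -> {set T}) :
  (#|\bigcup_(i | P i) F i| <= \sum_(i | P i) #|F i|)%N.
Proof.
elim/big_rec2: _ => [|i m U _ le_Um]; first by rewrite cards0.
by rewrite (leq_trans (leq_card_setU (F i) U).1) ?leq_add2l.
Qed.

Lemma card_disjoint_bigcup (I : finType) (F : I -> {set T}) :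
  (forall i j, i != j -> [disjoint F i & F j]) ->
  #|\bigcup_i F i| = (\sum_i #|F i|)%N.
Proof.
move=> disjF; rewrite -sum1_card (partition_disjoint_bigcup _ _ disjF).
by apply: eq_bigr => i _; rewrite sum1_card.
Qed.

End Cardinality.

Lemma frac_succ_mul_le (R : realFieldType) (k : nat) (mu a b : R) :
  mu <= a + b -> k%:R * b <= a -> k%:R / k.+1%:R * mu <= a.
Proof.
move=> le_mu le_kb; apply: le_trans (ler_wpM2l _ le_mu) _; first by rewrite divr_ge0.
by rewrite mulrAC ler_pdivrMr ?ltr0Sn // -natr1; nra.
Qed.

Section AdditiveLeveled.
Variables (R : realFieldType) (M : finType) (V : {set M} -> R).
Hypothesis leveledV : additive_leveled V.
Implicit Types (S T P Rem : {set M}) (g h : M).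

Lemma valuation_ge0 S : 0 <= V S. Proof. by case: leveledV. Qed.

Lemma valuation_sum S : V S = \sum_(g in S) V [set g]. Proof. by case: leveledV. Qed.

Lemma valuation_lt S T : (#|T| < #|S|)%N -> V T < V S.
Proof. by case: leveledV => _ _; apply. Qed.

Lemma valuationU1 g S : g \notin S -> V (g |: S) = V [set g] + V S.
Proof. by move=> gS; rewrite valuation_sum big_setU1 //= -valuation_sum. Qed.

Lemma valuation_le_D1 P h : V P <= V (P :\ h) + V [set h].
Proof.
have [hP | hP] := boolP (h \in P).
  by rewrite -{1}(setD1K hP) valuationU1 ?setD11 // addrC.
by rewrite (setDidPl _) ?lerDl ?valuation_ge0 // disjoint_sym disjoints1.
Qed.

Lemma valuation_lt_addU1 P S g : g \notin S -> (#|P| <= #|S|)%N ->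
  V P < V S + V [set g].
Proof. by move=> gS le_PS; rewrite addrC -valuationU1 // valuation_lt // cardsU1 gS. Qed.

Lemma exists_cheapest_good S : S != set0 ->
  exists2 h, h \in S & #|S|%:R * V [set h] <= V S.
Proof.
case/set0Pn => g0 g0S.
have [h hS h_min] := arg_minP (fun g => V [set g]) g0S.
exists h => //; rewrite mulr_natl -sumr_const (valuation_sum S).
exact: ler_sum.
Qed.

Lemma optimal_bundle_swap Rem S g h :
  S \subset Rem -> g \in Rem -> g \notin S -> h \in S ->
  (forall T, T \subset Rem -> #|T| = #|S| -> V T <= V S) ->
  V [set g] <= V [set h].
Proof.
move=> subS gRem gS hS optS.
have gSh : g \notin S :\ h by rewrite !inE negb_and gS orbT.
have VS : V S = V [set h] + V (S :\ h) by rewrite -{1}(setD1K hS) valuationU1 ?setD11.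
have := optS (g |: (S :\ h)); rewrite valuationU1 // VS lerD2r; apply.
  by rewrite subUset sub1set gRem (subset_trans (subD1set S h)).
by rewrite cardsU1 gSh [in RHS](cardsD1 h S) hS.
Qed.

End AdditiveLeveled.

Lemma exists_best_bundle (d : Order.disp_t) (T : orderType d) (M : finType)
    (W : {set M} -> T) (Rem : {set M}) s : (s <= #|Rem|)%N ->
  exists S : {set M}, [/\ S \subset Rem, #|S| = s
              & forall S' : {set M}, S' \subset Rem -> #|S'| = s -> (W S' <= W S)%O].
Proof.
move=> le_s.
have : [set S : {set M} | S \subset Rem & #|S| == s] != set0.
  by rewrite -card_gt0 cards_draws bin_gt0.
case/set0Pn => S0; rewrite inE => S0_ok.
have [S /andP[subS /eqP cardS] S_max] :=
  arg_maxP W (P := fun S : {set M} => (S \subset Rem) && (#|S| == s)) S0_ok.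
by exists S; split=> // S' subS' cardS'; apply: S_max; rewrite /= subS' cardS' eqxx.
Qed.

Section Allocations.
Variables (R : realFieldType) (M : finType) (n : nat).
Implicit Type B : {ffun 'I_n -> {set M}}.

Lemma seqmax_le (s : seq R) X : 0 <= X -> (forall x, x \in s -> x <= X) ->
  seqmax s <= X.
Proof.
move=> X_ge0 le_sX; rewrite /seqmax big_seq; apply: bigmax_le => [|x /le_sX //].
by case: s le_sX => [|x s] le_sX //=; apply: le_sX; exact: mem_head.
Qed.

Lemma mms_le (V : 'I_n -> {set M} -> R) i X : 0 <= X ->
  (forall B, is_allocation B -> exists j, V i (B j) <= X) -> mms V i <= X.
Proof.
move=> X_ge0 small; apply: seqmax_le => // x /mapP[B]; rewrite mem_enum.
move=> /small[j le_jX] ->; rewrite /seqmin.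
by apply: (bigmin_inf_seq _ (V i (B j))) le_jX => //; apply: map_f; rewrite mem_enum.
Qed.

Lemma allocation_disjoint B : is_allocation B ->
  forall i j, i != j -> [disjoint B i & B j].
Proof.
by case/andP => /forallP disjB _ i j; move: (disjB i) => /forallP /(_ j) /implyP.
Qed.

Lemma allocation_card_sum B : is_allocation B -> (\sum_j #|B j|)%N = #|M|.
Proof.
move=> allocB; have /andP[_ /eqP coverB] := allocB.
by rewrite -card_disjoint_bigcup ?coverB ?cardsT //; exact: allocation_disjoint.
Qed.

Lemma allocation_small_bundle B : (0 < n)%N -> is_allocation B ->
  exists j, (#|B j| <= #|M| %/ n)%N.
Proof.
move=> n_gt0 allocB.
have [|j] := @exists_lt_of_sum_lt _ (fun j => #|B j|) (#|M| %/ n).+1; last by exists j.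
rewrite allocation_card_sum // card_ord.
have := divn_eq #|M| n; have := ltn_pmod #|M| n_gt0; nia.
Qed.

Lemma allocation_small_bundleD1 B h : (0 < n)%N -> (#|M| %% n = 0)%N ->
  is_allocation B -> exists j, (#|B j :\ h| < #|M| %/ n)%N.
Proof.
move=> n_gt0 r0 allocB; apply: exists_lt_of_sum_lt.
have disjBh i j : i != j -> [disjoint B i :\ h & B j :\ h].
  by move/(allocation_disjoint allocB)/disjointWl/disjointWr; apply; apply: subD1set.
have : (#|\bigcup_j (B j :\ h)| <= #|[set~ h]|)%N.
  by apply/subset_leq_card/bigcupsP => j _; apply/subsetP => x; rewrite !inE => /andP[].
have : (0 < #|M|)%N by apply/card_gt0P; exists h.
rewrite card_disjoint_bigcup // cardsC1 card_ord.
have := divn_eq #|M| n; rewrite r0; nia.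
Qed.

End Allocations.

Section PickingRun.
Variables (R : realFieldType) (M : finType) (n : nat).
Variables (V : 'I_n -> {set M} -> R) (sigma : {perm 'I_n}).
Hypothesis n_gt0 : (0 < n)%N.
Hypothesis leveledV : forall i, additive_leveled (V i).
Implicit Types (B : {ffun 'I_n -> {set M}}) (t : 'I_n) (h : M).

Local Notation k := (#|M| %/ n)%N.
Local Notation r := (#|M| %% n)%N.

(* [picking_run V sigma B] is [forall t, picking_step B t] up to conversion. *)
Definition picking_step B t : Prop :=
  let Rem := ~: allocated_before sigma B t in
  [/\ B (sigma t) \subset Rem, #|B (sigma t)| = pick_size M t
    & forall S : {set M}, S \subset Rem -> #|S| = pick_size M t ->
        V (sigma t) S <= V (sigma t) (B (sigma t))].

Lemma sum_pick_size : (\sum_(t < n) pick_size M t)%N = #|M|.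
Proof.
have prefix N : (\sum_(t < N) (if t < n - r then k else k.+1) = N * k + (N - (n - r)))%N.
  by elim: N => [|N IHN]; rewrite ?big_ord0 // big_ord_recr /= IHN; case: ifP; lia.
rewrite (prefix n); have := divn_eq #|M| n; have := ltn_pmod #|M| n_gt0; lia.
Qed.

Lemma sum_pick_size_before t :
  (\sum_(t' : 'I_n | t' < t) pick_size M t' + pick_size M t <= #|M|)%N.
Proof.
rewrite -sum_pick_size [leqRHS](bigD1 t) //= addnC leq_add2l.
by apply: leq_sum_subpred => t' lt_t't; apply: contraTneq lt_t't => ->; rewrite ltnn.
Qed.

Lemma card_allocated_before B t :
  (forall t' : 'I_n, (t' < t)%N -> #|B (sigma t')| = pick_size M t') ->
  (#|allocated_before sigma B t| <= \sum_(t' : 'I_n | t' < t) pick_size M t')%N.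
Proof. by move=> sizeB; rewrite -(eq_bigr _ sizeB) card_bigcup_le. Qed.

Lemma pick_size_le_remaining B t :
  (forall t' : 'I_n, (t' < t)%N -> #|B (sigma t')| = pick_size M t') ->
  (pick_size M t <= #|~: allocated_before sigma B t|)%N.
Proof.
move=> sizeB; have := card_allocated_before sizeB; have := sum_pick_size_before t.
have := cardsC (allocated_before sigma B t); lia.
Qed.

Lemma picking_run_disjoint B : picking_run V sigma B ->
  forall i j, i != j -> [disjoint B i & B j].
Proof.
move=> runB i j; rewrite -(permKV sigma i) -(permKV sigma j) (inj_eq perm_inj).
move: (sigma^-1 i)%g (sigma^-1 j)%g => ti tj.
wlog lt_ij : ti tj / (ti < tj)%N => [W neq_ij|_].
  have [/W|/W|/val_inj eq_ij] := ltngtP ti tj; first exact.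
    by rewrite disjoint_sym; apply; rewrite eq_sym.
  by rewrite eq_ij eqxx in neq_ij.
have [subj _ _] : picking_step B tj := runB tj.
rewrite disjoints_subset subsetC (subset_trans subj) // setCS.
exact: (bigcup_sup ti lt_ij).
Qed.

Lemma picking_run_allocation B : picking_run V sigma B -> is_allocation B.
Proof.
move=> runB; have disjB := picking_run_disjoint runB.
apply/andP; split.
  by apply/forallP => i; apply/forallP => j; apply/implyP; exact: disjB.
rewrite eqEcard subsetT cardsT card_disjoint_bigcup //.
rewrite (reindex_inj (@perm_inj _ sigma)) /= -sum_pick_size.
by apply/eq_leq/eq_bigr => t _; have [] : picking_step B t := runB t.
Qed.

Lemma mms_le_large_pick B t : picking_run V sigma B -> (n - r <= t)%N ->
  mms V (sigma t) <= V (sigma t) (B (sigma t)).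
Proof.
move=> runB le_t; have [_ sizeS _] : picking_step B t := runB t.
have cardS : #|B (sigma t)| = k.+1 by rewrite sizeS /pick_size ifN // -leqNgt.
apply: mms_le => [|B' allocB']; first exact/valuation_ge0/leveledV.
have [j small_j] := allocation_small_bundle n_gt0 allocB'.
by exists j; apply/ltW/(valuation_lt (leveledV _)); rewrite cardS.
Qed.

Lemma remaining_gt_small_pick B t : picking_run V sigma B -> (0 < r)%N ->
  (t < n - r)%N -> (k < #|~: allocated_before sigma B t|)%N.
Proof.
move=> runB r_gt0 lt_t.
have sizeB t' : (t' < t)%N -> #|B (sigma t')| = k.
  have [_ -> _] : picking_step B t' := runB t'.
  by move=> lt_t't; rewrite /pick_size (ltn_trans lt_t't lt_t).
have : (#|allocated_before sigma B t| <= n.-1 * k)%N.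
  rewrite (leq_trans (card_bigcup_le _ _)) // (eq_bigr _ sizeB).
  rewrite (leq_trans (leq_sum_subpred (Q := fun t' => t' != t) _ _)) // => [t' lt_t't|].
    by apply: contraTneq lt_t't => ->; rewrite ltnn.
  by rewrite sum_nat_const cardC1 card_ord.
have : (n.-1 * k + k = n * k)%N by rewrite addnC -mulSn prednK.
have := cardsC (allocated_before sigma B t); have := divn_eq #|M| n; lia.
Qed.

Lemma mms_le_small_pick B t h : picking_run V sigma B -> (t < n - r)%N ->
  h \in B (sigma t) ->
  mms V (sigma t) <= V (sigma t) (B (sigma t)) + V (sigma t) [set h].
Proof.
move=> runB lt_t hS; have [subS sizeS optS] : picking_step B t := runB t.
have cardS : #|B (sigma t)| = k by rewrite sizeS /pick_size lt_t.
have leveled_t := leveledV (sigma t).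
apply: mms_le => [|B' allocB']; first by rewrite addr_ge0 ?valuation_ge0.
have [r0 | r_gt0] := posnP r.
  have [j small_j] := allocation_small_bundleD1 h n_gt0 r0 allocB'.
  exists j; apply: le_trans (valuation_le_D1 _ _ h) _; first exact: leveled_t.
  by rewrite lerD2r; apply/ltW/valuation_lt; rewrite ?cardS.
have : B (sigma t) \proper ~: allocated_before sigma B t.
  by rewrite properEcard subS cardS remaining_gt_small_pick.
case/properP => _ [g gRem gS].
have [j small_j] := allocation_small_bundle n_gt0 allocB'.
exists j; apply/ltW/(lt_le_trans (valuation_lt_addU1 leveled_t gS _)); rewrite ?cardS //.
rewrite lerD2l; apply: (optimal_bundle_swap _ subS gRem gS hS) => // T subT cardT.
by apply: optS; rewrite ?cardT.
Qed.

Lemma picking_run_mms B : picking_run V sigma B -> alpha_MMS V (k%:R / k.+1%:R) B.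
Proof.
move=> runB i; rewrite -(permKV sigma i); set t := (sigma^-1 i)%g.
have leveled_t := leveledV (sigma t).
have [lt_t | le_t] := ltnP t (n - r); last first.
  apply: (frac_succ_mul_le (b := 0)); rewrite ?addr0 ?mulr0 ?valuation_ge0 //.
  exact: mms_le_large_pick.
have [k0 | k_gt0] := posnP k; first by rewrite k0 !mul0r valuation_ge0.
have [_ sizeS _] : picking_step B t := runB t.
have [|h hS cheap_h] := exists_cheapest_good leveled_t (S := B (sigma t)).
  by rewrite -card_gt0 sizeS /pick_size lt_t.
rewrite sizeS /pick_size lt_t in cheap_h.
exact: frac_succ_mul_le (mms_le_small_pick runB lt_t hS) cheap_h.
Qed.

Lemma allocated_before_eq B B' t :
  (forall t' : 'I_n, (t' < t)%N -> B' (sigma t') = B (sigma t')) ->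
  allocated_before sigma B' t = allocated_before sigma B t.
Proof. exact: eq_bigr. Qed.

Lemma picking_step_congr B B' t :
  (forall t' : 'I_n, (t' <= t)%N -> B' (sigma t') = B (sigma t')) ->
  picking_step B t -> picking_step B' t.
Proof.
move=> eqB; rewrite /picking_step eqB // (allocated_before_eq (B := B)) // => t' lt_t't.
exact/eqB/ltnW.
Qed.

(* Each step only depends on the earlier bundles, so a run is built one step at a time. *)
Lemma picking_run_exists : exists B, picking_run V sigma B.
Proof.
suff prefix u : (u <= n)%N -> exists B, forall t : 'I_n, (t < u)%N -> picking_step B t.
  by have [B runB] := prefix n (leqnn n); exists B => t; exact: runB.
elim: u => [_ | u IHu lt_un]; first by exists [ffun=> set0].
have [B prefB] := IHu (ltnW lt_un); pose tu := Ordinal lt_un.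
have sizeB t' : (t' < tu)%N -> #|B (sigma t')| = pick_size M t'.
  by move=> /prefB; case.
have [S [subS cardS optS]] :=
  exists_best_bundle (V (sigma tu)) (pick_size_le_remaining sizeB).
pose B' := [ffun j => if j == sigma tu then S else B j].
have eqB t' : (t' < u)%N -> B' (sigma t') = B (sigma t').
  by move=> lt_t'u; rewrite ffunE (inj_eq perm_inj) -val_eqE /= ltn_eqF.
exists B' => t; rewrite ltnS leq_eqVlt => /orP[/eqP eq_tu | lt_tu].
  have -> : t = tu by apply: val_inj.
  by rewrite /picking_step (allocated_before_eq (B := B)) // ffunE eqxx.
apply: picking_step_congr (prefB t lt_tu) => t' le_t't.
exact/eqB/(leq_ltn_trans le_t't).
Qed.

End PickingRun.

Theorem mainTheorem1 (R : realFieldType) (M : finType) (n : nat)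
  (V : 'I_n -> {set M} -> R) (sigma : {perm 'I_n}) :
  (0 < n)%N ->
  (forall i, additive_leveled (V i)) ->
  let k := (#|M| %/ n)%N in
  (forall B : {ffun 'I_n -> {set M}}, picking_run V sigma B ->
     is_allocation B /\ alpha_MMS V (k%:R / k.+1%:R) B)
  /\ (exists B : {ffun 'I_n -> {set M}},
        is_allocation B /\ alpha_MMS V (k%:R / k.+1%:R) B).
Proof.
move=> n_gt0 leveledV k.
have run_ok B : picking_run V sigma B ->
    is_allocation B /\ alpha_MMS V (k%:R / k.+1%:R) B.
  move=> runB; split; first exact: (picking_run_allocation n_gt0 runB).
  exact: (picking_run_mms n_gt0 leveledV runB).
split=> //; have [B runB] := picking_run_exists V sigma n_gt0.
by exists B; exact: run_ok.
Qed.
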